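(* Let $n\ge3$ and $k$ an odd integer with $3\le k\le n$. Then $\chi(\mathfrak{g}_{n,k})=n-k+1$.
   Context: $\mathfrak{g}_{n,k}$ is the Lie algebra over a field $K$ of characteristic zero with basis $e_1,\dots,e_n$ whose only nonzero brackets between basis vectors (up to antisymmetry) are $[e_1,e_i]=e_{i+1}$ for $2\le i\le n-1$ and $[e_i,e_{k-i}]=(-1)^ie_n$ for $2\le i\le k-2$. For a Lie algebra $\mathfrak{h}$ and $\ell\in\mathfrak{h}^*$, $\mathfrak{h}(\ell)=\{y\in\mathfrak{h}\mid\ell([x,y])=0\ \forall x\in\mathfrak{h}\}$ and the index is $\chi(\mathfrak{h})=\min_{\ell\in\mathfrak{h}^*}\dim\mathfrak{h}(\ell)$. *)

From HB Require Import structures.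
From mathcomp Require Import all_boot all_order all_algebra.
From mathcomp Require Import ring.
Set Implicit Arguments. Unset Strict Implicit. Unset Printing Implicit Defensive.
Import Order.TTheory GRing.Theory Num.Theory.
Local Open Scope ring_scope.

(* Vectors of the n-dimensional Lie algebra are row vectors 'rV[K]_n;
   the basis vector e_(i+1) (paper, 1-based) is  basis i  for i : 'I_n. *)
Definition basis (K : fieldType) (n : nat) (i : 'I_n) : 'rV[K]_n := delta_mx 0 i.

(* Structure constants of g_{n,k}, 1-based indices as in the paper:
   gnk_coef n k i j l = coefficient of e_l in [e_i, e_j].
   Nonzero brackets: [e_1,e_j] = e_(j+1) (2 <= j <= n-1), its antisymmetric
   counterpart [e_i,e_1] = - e_(i+1), and [e_i,e_(k-i)] = (-1)^i e_n
   (2 <= i <= k-2); for odd k the latter family is itself antisymmetric. *)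
Definition gnk_coef (K : fieldType) (n k : nat) (i j l : nat) : K :=
  ((i == 1%N) && (2 <= j <= n.-1)%N && (l == j.+1))%:R
  - ((j == 1%N) && (2 <= i <= n.-1)%N && (l == i.+1))%:R
  + ((2 <= i <= k - 2)%N && (i + j == k)%N && (l == n))%:R * (-1) ^+ i.

Definition gnk_bracket (K : fieldType) (n k : nat) (x y : 'rV[K]_n) : 'rV[K]_n :=
  \row_(l < n) \sum_(i < n) \sum_(j < n)
     x 0 i * y 0 j * gnk_coef K n k i.+1 j.+1 l.+1.

Definition lform (K : fieldType) (n : nat) (f : 'rV[K]_n) (v : 'rV[K]_n) : K :=
  \sum_(i < n) f 0 i * v 0 i.

(* h(f) = { y | f([x,y]) = 0 for all x }, represented (mxalgebra style) as a
   square matrix whose row space is exactly that subspace: the row kernel of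
   the matrix M with M j i = f([e_i, e_j]). *)
Definition stab_mx (K : fieldType) (n : nat)
    (br : 'rV[K]_n -> 'rV[K]_n -> 'rV[K]_n) (f : 'rV[K]_n) : 'M[K]_n :=
  kermx (\matrix_(j < n, i < n) lform f (br (basis K i) (basis K j))).

Definition stab_dim (K : fieldType) (n : nat)
    (br : 'rV[K]_n -> 'rV[K]_n -> 'rV[K]_n) (f : 'rV[K]_n) : nat :=
  \rank (stab_mx br f).

Definition lie_index_is (K : fieldType) (n : nat)
    (br : 'rV[K]_n -> 'rV[K]_n -> 'rV[K]_n) (m : nat) : Prop :=
  (exists f : 'rV[K]_n, stab_dim br f = m) /\
  (forall f : 'rV[K]_n, (m <= stab_dim br f)%N).

Lemma lform_gnk_expand (K : fieldType) n k (f x y : 'rV[K]_n) :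
  lform f (@gnk_bracket K n k x y) =
  \sum_(i < n) \sum_(j < n) x 0 i * y 0 j *
      lform f (@gnk_bracket K n k (basis K i) (basis K j)).
Proof.
have E (i j : 'I_n) : lform f (@gnk_bracket K n k (basis K i) (basis K j)) =
    \sum_(l < n) f 0 l * gnk_coef K n k i.+1 j.+1 l.+1.
  apply: eq_bigr => l _; rewrite mxE; congr (_ * _).
  rewrite (bigD1 i) //= [X in _ + X]big1 => [|i' ne]; last first.
    by rewrite big1 // => j' _; rewrite !mxE (negbTE ne) andbF !mul0r.
  rewrite addr0 (bigD1 j) //= [X in _ + X]big1 => [|j' ne]; last first.
    by rewrite !mxE (negbTE ne) andbF mulr0 mul0r.
  by rewrite !mxE !eqxx /= !mul1r !addr0.
rewrite /lform in E *.
under eq_bigr => l _ do rewrite mxE mulr_sumr.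
rewrite exchange_big /=; apply: eq_bigr => i _.
under eq_bigr => l _ do rewrite mulr_sumr.
rewrite exchange_big /=.
under [RHS]eq_bigr => j _ do rewrite E mulr_sumr.
by apply: eq_bigr => j _; apply: eq_bigr => l _; ring.
Qed.

Lemma stab_mx_gnkP (K : fieldType) n k (f y : 'rV[K]_n) :
  reflect (forall x, lform f (@gnk_bracket K n k x y) = 0)
          (y <= stab_mx (@gnk_bracket K n k) f)%MS.
Proof.
apply: (iffP sub_kermxP) => [H x | H].
  rewrite lform_gnk_expand big1 // => i _.
  have := congr1 (fun M : 'rV[K]_n => M 0 i) H.
  rewrite !mxE => Hi.
  transitivity (x 0 i * 0); last by rewrite mulr0.
  rewrite -[in RHS]Hi mulr_sumr.
  by under [RHS]eq_bigr => j _ do rewrite !mxE mulrA.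
apply/rowP => i; rewrite !mxE.
have := H (basis K i); rewrite lform_gnk_expand (bigD1 i) //= [X in _ + X]big1 => [|i' ne]; last first.
  by rewrite big1 // => j _; rewrite !mxE (negbTE ne) andbF !mul0r.
rewrite addr0 => Hx; rewrite -[RHS]Hx.
under [RHS]eq_bigr => j _ do rewrite !mxE !eqxx mul1r.
by under eq_bigr => j _ do rewrite !mxE.
Qed.

(* dim h(f) is n minus the rank of the matrix (f([e_i, e_j]))_(j, i).  Every
   bracket [e_i, e_j] with i >= 2 and j >= k - 1 vanishes, so the rows j >= k - 1
   of that matrix are all multiples of the first unit row: the rank is at most
   (k - 2) + 1.  For f = e_n^* the k - 1 brackets [e_(n-1), e_1],
   [e_i, e_(k-i)] (2 <= i <= k - 2) and [e_1, e_(n-1)] have a nonzero e_n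
   component and occupy pairwise distinct rows and columns, so they form an
   invertible diagonal minor of size k - 1. *)

From mathcomp Require Import all_boot all_order all_algebra zify.
Import GRing.Theory.
Local Open Scope ring_scope.
Set Implicit Arguments. Unset Strict Implicit.

Section RankBounds.
Variable F : fieldType.

Lemma mxrank_mxsub m n m' n' (f : 'I_m' -> 'I_m) (g : 'I_n' -> 'I_n)
    (A : 'M[F]_(m, n)) :
  (\rank (mxsub f g A) <= \rank A)%N.
Proof.
rewrite mxsubcr; apply: leq_trans (mxrankS (rowsub_sub f A)).
rewrite -mxrank_tr -[leqRHS]mxrank_tr trmx_mxsub.
exact/mxrankS/rowsub_sub.
Qed.

Lemma mxrank_diag_mx r (d : 'rV[F]_r) :
  (forall i, d 0 i != 0) -> \rank (diag_mx d) = r.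
Proof.
move=> d_neq0; apply: mxrank_unit.
by rewrite unitmxE det_diag unitfE; apply/prodf_neq0 => i _.
Qed.

Lemma mxrank_ge_mxsub_diag m n r (f : 'I_r -> 'I_m) (g : 'I_r -> 'I_n)
    (A : 'M[F]_(m, n)) (d : 'rV[F]_r) :
  mxsub f g A = diag_mx d -> (forall i, d 0 i != 0) -> (r <= \rank A)%N.
Proof.
by move=> Ad d_neq0; rewrite -(mxrank_diag_mx d_neq0) -Ad mxrank_mxsub.
Qed.

Lemma mxrank_le_rows_col0 p q m (A : 'M[F]_(p, q.+1)) :
  (forall (j : 'I_p) (i : 'I_q.+1), (m <= j)%N -> i != 0 -> A j i = 0) ->
  (\rank A <= m.+1)%N.
Proof.
move=> A0; have [lt_pm | le_mp] := ltnP p m.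
  by apply: leq_trans (rank_leq_row A) _; lia.
pose B := A - pid_mx m *m A.
have BE j i : B j i = if (j < m)%N then 0 else A j i.
  rewrite !mxE (bigD1 j) //= big1 => [|j' ne_j'j]; last first.
    rewrite mxE; case: eqP => [/val_inj eq_jj' | _]; last by rewrite mul0r.
    by rewrite eq_jj' eqxx in ne_j'j.
  by rewrite mxE eqxx addr0; case: ifP; rewrite ?mul1r ?mul0r ?subrr ?subr0.
have -> : A = pid_mx m *m A + B by rewrite addrC subrK.
apply: leq_trans (mxrank_add _ _) _; rewrite -[m.+1]addn1 leq_add //.
  by apply: leq_trans (mxrankM_maxl _ _) _; rewrite rank_pid_mx.
have -> : B = col 0 B *m delta_mx 0 0.
  apply/matrixP => j i.
  rewrite [RHS]mxE big_ord1 [col _ _ _ _]mxE [delta_mx _ _ _ _]mxE !BE.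
  case: (eqVneq i 0) => [-> | i_neq0]; first by rewrite mulr1.
  by rewrite mulr0; case: ltnP => // le_mj; rewrite A0.
by apply: leq_trans (mxrankM_maxl _ _) _; apply: rank_leq_col.
Qed.
End RankBounds.

Definition form_mx (K : fieldType) (n : nat)
    (br : 'rV[K]_n -> 'rV[K]_n -> 'rV[K]_n) (f : 'rV[K]_n) : 'M[K]_n :=
  \matrix_(j < n, i < n) lform f (br (basis K i) (basis K j)).

Lemma stab_dimE (K : fieldType) n (br : 'rV[K]_n -> 'rV[K]_n -> 'rV[K]_n) f :
  stab_dim br f = (n - \rank (form_mx br f))%N.
Proof. exact: mxrank_ker. Qed.

Section Gnk.
Variables (K : fieldType) (k : nat).

Lemma form_mx_gnkE n (f : 'rV[K]_n) (i j : 'I_n) :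
  form_mx (@gnk_bracket K n k) f j i =
  \sum_(l < n) f 0 l * gnk_coef K n k i.+1 j.+1 l.+1.
Proof.
rewrite mxE; apply: eq_bigr => l _; rewrite mxE; congr (_ * _).
rewrite (bigD1 i) //= [X in _ + X]big1 => [|i' ne_i'i]; last first.
  by rewrite big1 // => j' _; rewrite !mxE (negbTE ne_i'i) andbF !mul0r.
rewrite addr0 (bigD1 j) //= [X in _ + X]big1 => [|j' ne_j'j]; last first.
  by rewrite !mxE (negbTE ne_j'j) andbF mulr0 mul0r.
by rewrite !mxE !eqxx /= !mul1r !addr0.
Qed.

Lemma gnk_coef_eq0 n a b l :
  (3 <= k)%N -> a != 1%N -> (k.-1 <= b)%N -> gnk_coef K n k a b l = 0.
Proof.
move=> k_ge3 a_neq1 b_ge; rewrite /gnk_coef (negbTE a_neq1).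
have -> : (b == 1%N) = false by lia.
have -> : ((2 <= a <= k - 2)%N && (a + b == k)%N) = false by lia.
by rewrite /= !mul0r subrr addr0.
Qed.

Lemma rank_form_mx_gnk_le n (f : 'rV[K]_n.+1) :
  (3 <= k)%N -> (\rank (form_mx (@gnk_bracket K n.+1 k) f) <= k.-1)%N.
Proof.
move=> k_ge3; have -> : k.-1 = (k - 2).+1 by lia.
apply: mxrank_le_rows_col0 => j i le_j i_neq0; rewrite form_mx_gnkE.
by rewrite big1 // => l _; rewrite gnk_coef_eq0 ?mulr0 //; lia.
Qed.

(* 0-based indices of the k - 1 pairs (e_i, e_j) of the header, listed as
   s = 0, 1 <= s <= k - 3, s = k - 2. *)
Definition gnk_match_fst (n s : nat) : nat :=
  if s == 0%N then (n - 2)%N else if (s < k - 2)%N then (k - 2 - s)%N else 0%N.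

Definition gnk_match_snd (n s : nat) : nat :=
  if (s < k - 2)%N then s else (n - 2)%N.

Ltac case_gnk_coef a b := rewrite /gnk_coef;
  case: ((a.+1 == 1%N) && _ && _) / boolP => ?;
  case: ((b.+1 == 1%N) && _ && _) / boolP => ?;
  case: ((2 <= a.+1 <= _)%N && _ && _) / boolP => ?; try (exfalso; lia).

Lemma gnk_coef_match_neq0 n s : (3 <= k <= n)%N -> (s < k.-1)%N ->
  gnk_coef K n k (gnk_match_fst n s).+1 (gnk_match_snd n s).+1 n != 0.
Proof.
move=> le_3kn lt_s.
move Ha: (gnk_match_fst n s) => a; move Hb: (gnk_match_snd n s) => b.
move: Ha Hb; rewrite /gnk_match_fst /gnk_match_snd.
case: ifP => ?; case: ifP => ?; try case: ifP => ?; move=> Ha Hb; case_gnk_coef a b.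
all: by rewrite ?mul0r ?mul1r ?subr0 ?sub0r ?addr0 ?subrr ?add0r
                ?oppr_eq0 ?oner_eq0 ?signr_eq0.
Qed.

Lemma gnk_coef_match_eq0 n r s : (3 <= k <= n)%N ->
    (r < k.-1)%N -> (s < k.-1)%N -> r != s ->
  gnk_coef K n k (gnk_match_fst n s).+1 (gnk_match_snd n r).+1 n = 0.
Proof.
move=> le_3kn lt_r lt_s ne_rs.
move Ha: (gnk_match_fst n s) => a; move Hb: (gnk_match_snd n r) => b.
move: Ha Hb; rewrite /gnk_match_fst /gnk_match_snd.
case: ifP => ?; case: ifP => ?; try case: ifP => ?; move=> Ha Hb; case_gnk_coef a b.
all: by rewrite !mul0r subrr addr0.
Qed.

Lemma rank_form_mx_gnk_ge n : (3 <= k <= n.+1)%N ->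
  (k.-1 <= \rank (form_mx (@gnk_bracket K n.+1 k) (delta_mx ord0 ord_max)))%N.
Proof.
move=> le_3kn.
pose g (r : 'I_k.-1) : 'I_n.+1 := inord (gnk_match_snd n.+1 r).
pose h (s : 'I_k.-1) : 'I_n.+1 := inord (gnk_match_fst n.+1 s).
have gE r : (g r : nat) = gnk_match_snd n.+1 r.
  by rewrite inordK // /gnk_match_snd; case: ifP; lia.
have hE s : (h s : nat) = gnk_match_fst n.+1 s.
  by rewrite inordK // /gnk_match_fst; case: ifP; try case: ifP; lia.
pose d := \row_(s < k.-1)
  gnk_coef K n.+1 k (gnk_match_fst n.+1 s).+1 (gnk_match_snd n.+1 s).+1 n.+1.
apply: (@mxrank_ge_mxsub_diag _ _ _ _ g h _ d); last first.
  by move=> s; rewrite mxE gnk_coef_match_neq0.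
apply/matrixP => r s; rewrite [LHS]mxE form_mx_gnkE (bigD1 ord_max) //= big1.
  rewrite !mxE !eqxx mul1r addr0 gE hE.
  case: (eqVneq r s) => [-> | ne_rs]; first by rewrite mulr1n.
  by rewrite mulr0n gnk_coef_match_eq0.
by move=> l ne_l; rewrite !mxE (negbTE ne_l) andbF mul0r.
Qed.
End Gnk.

Theorem proposition6p7 (K : fieldType) (charK0 : [pchar K] =i pred0)
    (n k : nat) (hn : (3 <= n)%N) (hk_odd : odd k) (hk : (3 <= k <= n)%N) :
  lie_index_is (@gnk_bracket K n k) (n - k + 1).
Proof.
case: n hn hk => [// | n] _ le_3kn; have k_ge3 : (3 <= k)%N by lia.
split.
  exists (delta_mx ord0 ord_max); rewrite stab_dimE.
  have := rank_form_mx_gnk_ge K le_3kn.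
  have := rank_form_mx_gnk_le (delta_mx ord0 ord_max : 'rV[K]_n.+1) k_ge3.
  lia.
by move=> f; rewrite stab_dimE; have := rank_form_mx_gnk_le f k_ge3; lia.
Qed.
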